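(* Let $\mathcal C$ be a Clifford circuit with linear outcome code and $M$ a positive integer. The Low-Weight Stabilizer Algorithm on input $(\mathcal C,M)$ returns exactly the set of all connected stabilizers of the spacetime code of $\mathcal C$ of weight at most $M$.
   Context: A Clifford circuit on $n$ qubits is a finite sequence of operations, each a unitary Clifford gate or the measurement of a Hermitian $n$-qubit Pauli, each with a level in $\{1,2,\dots\}$; operations of equal level have disjoint supports and levels are nondecreasing; depth $\Delta$ = maximal level. In circuit order the $j$-th measurement measures $S_j$ at level $\ell_j$ ($j=1,\dots,m$); outcome $o_j=0$ for eigenvalue $+1$, $1$ for $-1$. The outcome code $\mathcal O(\mathcal C)$ is the set of outcome bit-strings occurring with nonzero probability for some input state; $\perp$ refers to $(u|v)=\sum u_iv_i\bmod 2$. $\overline{\mathcal P}_N$ is the $N$-qubit Pauli group modulo phases; $U_\ell$ is the product of unitary gates of level $\ell$. Fault operators $F\in\overline{\mathcal P}_{n(\Delta+1)}$ act on qubits $(\ell+0.5,q)$, $0\le\ell\le\Delta$, $1\le q\le n$, with level components $F_{\ell+0.5}$; $\eta_{\ell+0.5}(P)$ is $P$ at level $\ell+0.5$ and $I$ elsewhere. Back-cumulant $\overleftarrow F$: start with $F$; for $\ell=\Delta,\dots,1$ replace $\overleftarrow F_{\ell-0.5}$ by $\overleftarrow F_{\ell-0.5}\cdot U_\ell^{-1}\overleftarrow F_{\ell+0.5}U_\ell$. $F(u)=\prod_j\eta_{\ell_j-0.5}(S_j^{u_j})$. The stabilizers of the spacetime code are the elements of $\{\overleftarrow{F(u)}:u\in\mathcal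 O(\mathcal C)^\perp\}$; the weight of a stabilizer is the number of qubits on which it acts nontrivially. The spacetime graph $G$ has vertex set $\{1,\dots,n\}\times\{0.5,1.5,\dots,\Delta+0.5\}$ (vertex $(q,\ell+0.5)$ identified with qubit $(\ell+0.5,q)$), and for every operation of level $\ell$ acting on qubits $q_1,\dots,q_t$, all vertices $(q_i,\ell-0.5)$, $(q_i,\ell+0.5)$, $i=1,\dots,t$, are pairwise joined by edges. A stabilizer is connected if its support is nonempty and connected in $G$. Low-Weight Stabilizer Algorithm: start with an empty output set; for every vertex $v$ of $G$, let $A$ be the set of vertices at graph distance at most $\lfloor M/2\rfloor$ from $v$, compute a generating set of the subgroup of stabilizers of the spacetime code whose support is contained in $A$, and add to the output every element of this subgroup of weight at most $M$ whose support is nonempty and connected in $G$. *)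

From HB Require Import structures.
From mathcomp Require Import all_boot all_order all_algebra.
Set Implicit Arguments.
Unset Strict Implicit.
Unset Printing Implicit Defensive.
Import Order.TTheory GRing.Theory Num.Theory.
Local Open Scope ring_scope.

Section Defs.
Variable C : numClosedFieldType.
Variable n : nat.

Definition basis := {ffun 'I_n -> bool}.
Definition state := basis -> C.
Definition oper := basis -> basis -> C.     (* matrix entries <a|A|b> *)

Definition opapply (A : oper) (psi : state) : state :=
  fun a => \sum_(b : basis) A a b * psi b.
Definition opmul (A B : oper) : oper :=
  fun a c => \sum_(b : basis) A a b * B b c.
Definition opadj (A : oper) : oper := fun a b => (A b a)^*.
Definition opid : oper := fun a b => (a == b)%:R.

Definition unitary (U : oper) : Prop :=
  forall a b, opmul (opadj U) U a b = opid a b.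

(* operator acting (at most) on the qubits of Q: U = V (x) I_{complement} *)
Definition agreeOn (Q : {set 'I_n}) (a b : basis) := [forall q in Q, a q == b q].
Definition agreeOff (Q : {set 'I_n}) (a b : basis) := agreeOn (~: Q) a b.
Definition oper_supported_on (Q : {set 'I_n}) (U : oper) : Prop :=
  (forall a b, ~~ agreeOff Q a b -> U a b = 0) /\
  (forall a b a' b', agreeOff Q a b -> agreeOff Q a' b' ->
     agreeOn Q a a' -> agreeOn Q b b' -> U a b = U a' b').

(* P q = (x_q, z_q): I = (0,0), X = (1,0), Z = (0,1), Y = (1,1) *)
Definition pauli := {ffun 'I_n -> bool * bool}.
Definition pauliI : pauli := [ffun _ => (false, false)].
Definition pmul1 (s t : bool * bool) : bool * bool := (s.1 (+) t.1, s.2 (+) t.2).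
Definition pmul (P Q : pauli) : pauli := [ffun q => pmul1 (P q) (Q q)].
Definition pauli_supp (P : pauli) : {set 'I_n} := [set q | P q != (false, false)].

(* Hermitian representative  (tensor of I, X, Y, Z):
   <a| X^x Z^z |b> = (-1)^{z.b} [a = b + x],  Y = i X Z *)
Definition pauliOp (P : pauli) : oper := fun a b =>
  if [forall q, a q == (b q (+) (P q).1)]
  then 'i ^+ #|[set q | (P q).1 && (P q).2]| * (-1) ^+ #|[set q | (P q).2 && b q]|
  else 0.

(* projector onto outcome o of the measurement of the Hermitian Pauli
   (-1)^s pauliOp P :  (I + (-1)^o (-1)^s P) / 2 *)
Definition measProj (s : bool) (P : pauli) (o : bool) : oper := fun a b =>
  (opid a b + (-1) ^+ (o + s) * pauliOp P a b) / 2%:R.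

(* Gate U act Q l : unitary U on the qubits Q at level l, with
     act P = the class of U^{-1} P U modulo phases;
   Meas s P Q l   : measurement of (-1)^s P, acting on qubits Q, level l *)
Inductive operation :=
| Gate of oper & (pauli -> pauli) & {set 'I_n} & nat
| Meas of bool & pauli & {set 'I_n} & nat.

Definition op_level (o : operation) : nat :=
  match o with Gate _ _ _ l => l | Meas _ _ _ l => l end.
Definition op_qubits (o : operation) : {set 'I_n} :=
  match o with Gate _ _ Q _ => Q | Meas _ _ Q _ => Q end.

Definition circuit := seq operation.
Definition dummy_op : operation := Meas false pauliI set0 0.

Definition wf_operation (o : operation) : Prop :=
  match o with
  | Gate U act Q l =>
      [/\ (1 <= l)%N, unitary U, oper_supported_on Q U &
        forall P : pauli, exists c : C, c != 0 /\
          forall a b, opmul (opadj U) (opmul (pauliOp P) U) a b = c * pauliOp (act P) a b]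
  | Meas s P Q l => (1 <= l)%N /\ pauli_supp P \subset Q
  end.

Definition wf_circuit (c : circuit) : Prop :=
  [/\ forall i, (i < size c)%N -> wf_operation (nth dummy_op c i),
      sorted leq (map op_level c) &
      forall i j, (i < j < size c)%N ->
        op_level (nth dummy_op c i) = op_level (nth dummy_op c j) ->
        [disjoint op_qubits (nth dummy_op c i) & op_qubits (nth dummy_op c j)]].

Definition depth (c : circuit) : nat := \max_(o <- c) op_level o.

Definition measOf (o : operation) : option (pauli * nat) :=
  match o with Meas _ P _ l => Some (P, l) | _ => None end.
(* the measured Paulis S_j (mod phases) with their levels l_j, circuit order *)
Definition meas (c : circuit) : seq (pauli * nat) := pmap measOf c.
Definition nmeas (c : circuit) : nat := size (meas c).

(* run the circuit on psi with measurement outcomes os (unnormalised) *)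
Fixpoint run (c : circuit) (os : seq bool) (psi : state) : state :=
  match c with
  | [::] => psi
  | Gate U _ _ _ :: r => run r os (opapply U psi)
  | Meas s P _ _ :: r => run r (behead os) (opapply (measProj s P (head false os)) psi)
  end.

Definition outcome_code (c : circuit) (o : seq bool) : Prop :=
  size o = nmeas c /\ exists (psi : state) (b : basis), run c o psi b != 0.

Definition bdot (u v : seq bool) : bool :=
  odd (\sum_(i < size u) (nth false u i && nth false v i)).
Definition bxor (u v : seq bool) : seq bool := [seq p.1 (+) p.2 | p <- zip u v].

Definition linear_outcome_code (c : circuit) : Prop :=
  outcome_code c (nseq (nmeas c) false) /\
  forall o1 o2, outcome_code c o1 -> outcome_code c o2 -> outcome_code c (bxor o1 o2).

Definition outcome_perp (c : circuit) (u : seq bool) : Prop :=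
  size u = nmeas c /\ forall o, outcome_code c o -> bdot u o = false.

(* vertex / spacetime qubit (q, k) stands for (q, k + 0.5), 0 <= k <= depth *)
Definition vertex (c : circuit) := ('I_n * 'I_(depth c).+1)%type.
Definition fault (c : circuit) := {ffun vertex c -> bool * bool}.

Definition fsupp c (F : fault c) : {set vertex c} := [set v | F v != (false, false)].
Definition weight c (F : fault c) : nat := #|fsupp F|.

Definition eta c (k : nat) (P : pauli) : fault c :=
  [ffun v => if val v.2 == k then P v.1 else (false, false)].
Definition fmul c (F G : fault c) : fault c := [ffun v => pmul1 (F v) (G v)].
Definition fault1 c : fault c := [ffun _ => (false, false)].

(* F(u) = prod_j eta_{l_j - 0.5}(S_j^{u_j}) *)
Definition Fof c (u : seq bool) : fault c :=
  foldr (fun p acc => if p.1 then fmul (eta c p.2.2.-1 p.2.1) acc else acc)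
        (fault1 c) (zip u (meas c)).

Definition comp c (F : fault c) (k : nat) : pauli :=
  [ffun q => if (k < (depth c).+1)%N then F (q, inord k) else (false, false)].

(* P |-> U_l^{-1} P U_l (mod phases), U_l = product of the gates of level l *)
Definition conjLevel (c : circuit) (l : nat) (P : pauli) : pauli :=
  foldr (fun o acc => match o with
                      | Gate _ act _ l' => if l' == l then act acc else acc
                      | _ => acc end) P c.

(* back-cumulant: bcAux d = <-F_{depth - d + 0.5} *)
Fixpoint bcAux c (F : fault c) (d : nat) : pauli :=
  match d with
  | 0 => comp F (depth c)
  | d'.+1 => pmul (comp F (depth c - d'.+1)) (conjLevel c (depth c - d') (bcAux F d'))
  end.
Definition backcum c (F : fault c) : fault c :=
  [ffun v => bcAux F (depth c - val v.2) v.1].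

Definition stabilizer c (F : fault c) : Prop :=
  exists u, outcome_perp c u /\ F = backcum (Fof c u).

Definition adjG c (v w : vertex c) : bool :=
  (v != w) &&
  has (fun o => [&& v.1 \in op_qubits o, w.1 \in op_qubits o,
                   (val v.2 == (op_level o).-1) || (val v.2 == op_level o) &
                   (val w.2 == (op_level o).-1) || (val w.2 == op_level o)]) c.

Fixpoint ball c (v : vertex c) (r : nat) : {set vertex c} :=
  match r with
  | 0 => [set v]
  | r'.+1 => ball v r' :|: [set w | [exists x in ball v r', adjG x w]]
  end.

Definition connected_set c (S : {set vertex c}) : Prop :=
  S != set0 /\
  forall v w, v \in S -> w \in S ->
    connect [rel x y | [&& x \in S, y \in S & adjG x y]] v w.

Definition connected_stabilizer c (F : fault c) : Prop :=
  stabilizer F /\ connected_set (fsupp F).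

Definition stab_subgroup_in c (A : {set vertex c}) (F : fault c) : Prop :=
  stabilizer F /\ fsupp F \subset A.

Definition low_weight_output c (M : nat) (F : fault c) : Prop :=
  exists v : vertex c,
    [/\ stab_subgroup_in (ball v M./2) F, (weight F <= M)%N &
        connected_set (fsupp F)].

End Defs.

From mathcomp Require Import all_boot all_order all_algebra.
Set Implicit Arguments.
Unset Strict Implicit.
Unset Printing Implicit Defensive.

(* The algorithm only ever outputs connected stabilizers of weight at most M,
   so the content is the converse: the support S of a connected stabilizer
   lies in the ball of radius |S|/2 around one of its own vertices, measured
   inside the subgraph induced on S.  In a connected S with at least three
   vertices one finds two vertices u1, u2, each adjacent to S' = S - {u1, u2},
   such that S' is still connected: take u1 farthest from an arbitrary
   vertex, and u2 farthest, inside S - {u1}, from a neighbour of u1.  By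
   induction S' has a centre of radius |S'|/2, and u1, u2 are one step
   further out.  The argument never uses well-formedness of the circuit,
   linearity of the outcome code, or M > 0. *)

Section Balls.
Variables (T : finType) (r : rel T).

Fixpoint rball (v : T) (k : nat) : {set T} :=
  if k is k'.+1 then rball v k' :|: [set w | [exists x in rball v k', r x w]]
  else [set v].

Lemma rball_subS v k : rball v k \subset rball v k.+1.
Proof. exact: subsetUl. Qed.

Lemma rball_mono v k k' : k <= k' -> rball v k \subset rball v k'.
Proof.
move=> /subnK <-; elim: (k' - k) => // d IH.
by rewrite addSn (subset_trans IH) ?rball_subS.
Qed.

Lemma rball_center v k : v \in rball v k.
Proof. by rewrite (subsetP (rball_mono v (leq0n k))) ?set11. Qed.

Lemma rball_step v k x y : x \in rball v k -> r x y -> y \in rball v k.+1.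
Proof.
by move=> xB rxy; rewrite !inE; apply/orP; right; apply/existsP; exists x; rewrite xB.
Qed.

Lemma rball_path v p : path r v p -> last v p \in rball v (size p).
Proof.
elim/last_ind: p => [|p x IH]; first by rewrite inE.
rewrite rcons_path last_rcons size_rcons => /andP[/IH pB rx].
exact: rball_step pB rx.
Qed.

Lemma rball_connect v k w : w \in rball v k -> connect r v w.
Proof.
elim: k w => [|k IH] w /=; first by rewrite inE => /eqP->.
rewrite !inE => /orP[/IH //|/existsP[x /andP[/IH vx rxw]]].
exact: connect_trans vx (connect1 rxw).
Qed.

End Balls.

Lemma rball_sub_rel (T : finType) (r1 r2 : rel T) v k :
  subrel r1 r2 -> rball r1 v k \subset rball r2 v k.
Proof.
move=> r12; elim: k => //= k IH; apply/subsetP => w; rewrite !inE.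
case/orP=> [/(subsetP IH)->//|/existsP[x /andP[xB rxw]]].
by apply/orP; right; apply/existsP; exists x; rewrite (subsetP IH) // r12.
Qed.

Section InducedSubgraph.
Variables (T : finType) (e : rel T).
Hypothesis e_sym : symmetric e.
Implicit Types S : {set T}.

Definition restr_rel S : rel T := [rel x y | [&& x \in S, y \in S & e x y]].

Definition connected_on S : Prop :=
  forall v w, v \in S -> w \in S -> connect (restr_rel S) v w.

Lemma restr_rel_sym S : symmetric (restr_rel S).
Proof. by move=> x y; rewrite /restr_rel /= e_sym andbCA. Qed.

Lemma restr_rel_sub S S' : S \subset S' -> subrel (restr_rel S) (restr_rel S').
Proof. by move/subsetP=> sSS' x y /and3P[xS yS exy]; rewrite /restr_rel /= !sSS'. Qed.

Lemma path_restr_sub S x p : path (restr_rel S) x p -> {subset p <= S}.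
Proof.
elim: p x => //= y p IH x /andP[/and3P[_ yS _] /IH pS] z.
by rewrite inE => /predU1P[->|/pS].
Qed.

Lemma connected_on_rball S v k :
  v \in S -> S \subset rball (restr_rel S) v k -> connected_on S.
Proof.
move=> vS /subsetP SB x y /SB/rball_connect vx /SB/rball_connect vy.
by rewrite (sym_connect_sym (@restr_rel_sym S)) in vx; exact: connect_trans vx vy.
Qed.

Lemma connected_on_sub_rball S v :
  connected_on S -> v \in S -> S \subset rball (restr_rel S) v #|S|.-1.
Proof.
move=> connS vS; apply/subsetP=> w wS.
have /connectP[p pP ->] := connS v w vS wS.
case: (shortenP pP) => q qP q_uniq _.
have qS : {subset v :: q <= S}.
  by move=> z; rewrite inE => /predU1P[->|/(path_restr_sub qP)].
have size_q : size q <= #|S|.-1.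
  rewrite -ltnS (leq_trans _ (leqSpred _)) // -[(size q).+1]/(size (v :: q)).
  by rewrite -(card_uniqP q_uniq); apply/subset_leq_card/subsetP.
exact: subsetP (rball_mono _ _ size_q) _ (rball_path qP).
Qed.

Lemma rball_restr_setD1 S u v k : u \notin rball (restr_rel S) v k ->
  rball (restr_rel (S :\ u)) v k = rball (restr_rel S) v k.
Proof.
elim: k => //= k IH; rewrite in_setU negb_or => /andP[uBk uN].
rewrite IH //; congr (_ :|: _); apply/setP=> w; rewrite !inE.
apply/existsP/existsP=> -[x /andP[xB /and3P[xS wS exw]]]; exists x; rewrite xB /restr_rel /=.
  by move: xS wS; rewrite !inE => /andP[_ ->] /andP[_ ->].
have xu : x != u by apply: contraNneq uBk => <-.
have wu : w != u.
  apply: contraNneq uN => <-; rewrite inE; apply/existsP; exists x.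
  by rewrite xB /restr_rel /= xS wS.
by rewrite !inE xu wu xS wS.
Qed.

(* A vertex farthest from v is not a cut vertex. *)
Lemma connected_on_noncut S v : connected_on S -> v \in S -> 1 < #|S| ->
  exists2 u, u \in S :\ v & connected_on (S :\ u) /\ exists2 y, y \in S :\ u & e y u.
Proof.
move=> connS vS S_gt1; pose B := rball (restr_rel S) v.
have B_full : exists k, S \subset B k.
  by exists #|S|.-1; exact: connected_on_sub_rball.
case: (@ex_minnP (fun k => S \subset B k) B_full) => -[|d] SBd d_min.
  by move: S_gt1; rewrite ltnNge (leq_trans (subset_leq_card SBd)) // cards1.
have /subsetPn[u uS uBd] : ~~ (S \subset B d) by apply/negP=> /d_min; rewrite ltnn.
have B'E := rball_restr_setD1 uBd.
have := subsetP SBd u uS; rewrite /B /= in_setU (negbTE uBd) inE.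
case/existsP=> y /andP[yBd /and3P[yS _ eyu]].
have yu : y != u by apply: contraNneq uBd => <-.
exists u; first by rewrite in_setD1 uS andbT; apply: contraNneq uBd => ->; apply: rball_center.
split; last by exists y; rewrite // in_setD1 yu.
apply: (@connected_on_rball _ v d.+1).
  by rewrite in_setD1 vS andbT; apply: contraNneq uBd => <-; apply: rball_center.
apply/subsetP=> w; rewrite in_setD1 => /andP[wu wS].
move: (subsetP SBd w wS); rewrite /B /= !in_setU B'E => /orP[->//|].
rewrite !inE => /existsP[x /andP[xBd /and3P[xS _ exw]]]; apply/orP; right.
have xu : x != u by apply: contraNneq uBd => <-.
by apply/existsP; exists x; rewrite xBd /restr_rel /= !in_setD1 xu xS wu wS.
Qed.

Lemma connected_on_noncut2 S : connected_on S -> 2 < #|S| ->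
  exists u1 u2, [/\ u1 \in S, u2 \in S :\ u1, connected_on (S :\ u1 :\ u2),
    exists2 y, y \in S :\ u1 :\ u2 & e y u1 & exists2 y, y \in S :\ u1 :\ u2 & e y u2].
Proof.
move=> connS S_gt2; have /card_gt0P[v vS] := ltnW (ltnW S_gt2).
have [u1 u1S [connS1 [y1 y1S1 ey1]]] := connected_on_noncut connS vS (ltnW S_gt2).
move: u1S; rewrite in_setD1 => /andP[_ u1S].
have S1_gt1 : 1 < #|S :\ u1| by move: S_gt2; rewrite (cardsD1 u1) u1S.
have [u2 u2S1 [connS2 [y2 y2S2 ey2]]] := connected_on_noncut connS1 y1S1 S1_gt1.
move: u2S1; rewrite in_setD1 => /andP[u2y1 u2S1].
by exists u1, u2; split=> //; [exists y1; rewrite // in_setD1 eq_sym u2y1 | exists y2].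
Qed.

Lemma connected_on_radius S : connected_on S -> 0 < #|S| ->
  exists2 v, v \in S & S \subset rball (restr_rel S) v #|S|./2.
Proof.
have [N] := ubnP #|S|; elim: N S => // N IH S S_ltN connS S_gt0.
have [S_le2 | S_gt2] := leqP #|S| 2.
  have /card_gt0P[v vS] := S_gt0; exists v => //.
  rewrite (_ : #|S|./2 = #|S|.-1); first exact: connected_on_sub_rball.
  by case: #|S| S_le2 => [|[|[|]]].
have [u1 [u2 [u1S u2S1 connS' [y1 y1S' ey1] [y2 y2S' ey2]]]] :=
  connected_on_noncut2 connS S_gt2.
set S' := S :\ u1 :\ u2 in connS' y1S' y2S'.
have cardS : #|S| = #|S'|.+2 by rewrite (cardsD1 u1) u1S (cardsD1 u2 (S :\ u1)) u2S1.
have S'S : S' \subset S by rewrite (subset_trans (subD1set _ _) (subD1set _ _)).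
have [||v vS' S'B] := IH S' _ connS'; rewrite ?cardS // in S_ltN S_gt2 *.
  by rewrite -ltnS (leq_trans _ S_ltN).
have S'_sub_B : S' \subset rball (restr_rel S) v #|S'|./2.
  by apply: subset_trans S'B _; apply: rball_sub_rel; apply: restr_rel_sub.
exists v; first exact: subsetP S'S v vS'.
apply/subsetP=> w wS; case: (boolP (w \in S')) => [wS'|].
  exact: subsetP (rball_subS _ _ _) _ (subsetP S'_sub_B w wS').
have u2S : u2 \in S by move: u2S1; rewrite in_setD1 => /andP[].
rewrite !in_setD1 wS andbT negb_and !negbK => /orP[/eqP->|/eqP->].
  apply: rball_step (subsetP S'_sub_B _ y2S') _.
  by rewrite /restr_rel /= (subsetP S'S _ y2S') u2S ey2.
apply: rball_step (subsetP S'_sub_B _ y1S') _.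
by rewrite /restr_rel /= (subsetP S'S _ y1S') u1S ey1.
Qed.
End InducedSubgraph.

Lemma adjG_sym (C : numClosedFieldType) (n : nat) (c : circuit C n) :
  symmetric (adjG (c := c)).
Proof.
move=> v w; rewrite /adjG eq_sym; congr andb; apply: eq_has => o /=.
by apply/and4P/and4P => -[*]; split.
Qed.

Lemma ballE (C : numClosedFieldType) (n : nat) (c : circuit C n) (v : vertex c) k :
  ball v k = rball (adjG (c := c)) v k.
Proof. by elim: k => //= k ->. Qed.

Theorem mainTheorem13 (C : numClosedFieldType) (n : nat) (c : circuit C n) (M : nat) :
  wf_circuit c -> linear_outcome_code c -> (0 < M)%N ->
  forall F : fault c,
    low_weight_output M F <-> (connected_stabilizer F /\ (weight F <= M)%N).
Proof.
move=> _ _ _ F; split; first by case=> v [[stF _] wF connF].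
case=> -[stF [suppF_neq0 connF]] wF.
have suppF_gt0 : 0 < #|fsupp F| by rewrite card_gt0.
have [v _ suppF_ball] := connected_on_radius (@adjG_sym C n c) connF suppF_gt0.
exists v; split => //; split => //.
apply: subset_trans suppF_ball _; rewrite ballE.
apply: subset_trans (rball_sub_rel _ _ _) (rball_mono _ _ (half_leq wF)).
by move=> x y /and3P[].
Qed.
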